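(* Let $S$ be a finite poset whose Hasse graph $\Gamma(S)$ is the path $A_n$. Then $S$ is either a chain or a wattle if and only if every connected component of the induced subgraph of $\Gamma(S)$ on $S^\times$ has an even number of vertices.
   Context: $\Gamma(S)$: vertices $S$, edge between $s,s'$ when one covers the other. $S^\times$ is the set of junction points of $S$: elements covering at least two elements of $S$ or covered by at least two elements of $S$. A wattle is a poset that is a disjoint union of chains $Z_1,\dots,Z_t$ ($t\ge2$, $|Z_i|\ge2$) where for $i=1,\dots,t-1$ the minimal element of $Z_i$ is less than the maximal element of $Z_{i+1}$, with no other comparabilities between elements of different chains. *)

From mathcomp Require Import all_boot all_order.
Set Implicit Arguments. Unset Strict Implicit. Unset Printing Implicit Defensive.
Import Order.Theory.
Local Open Scope order_scope.

Section Defs.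
Variables (d : Order.disp_t) (T : finPOrderType d).

Definition covers (y x : T) : bool :=
  (x < y) && [forall z : T, ~~ ((x < z) && (z < y))].

Definition hasse_adj (x y : T) : bool := covers x y || covers y x.

Definition hasse_is_path : Prop :=
  exists n (f : 'I_n -> T), bijective f /\
    forall i j : 'I_n, hasse_adj (f i) (f j) = ((i.+1 == j) || (j.+1 == i))%N.

Definition junction : {set T} :=
  [set x | (1 < #|[set y | covers x y]|)%N || (1 < #|[set y | covers y x]|)%N].

Definition junction_adj : rel T :=
  fun x y => [&& x \in junction, y \in junction & hasse_adj x y].

Definition junction_component (x : T) : {set T} :=
  [set y in junction | connect junction_adj x y].

Definition even_junction_components : Prop :=
  forall x, x \in junction -> ~~ odd #|junction_component x|.

Definition is_chain : Prop := forall x y : T, x >=< y.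

(* wattle: chains Z_0..Z_{t-1} are the fibres of c *)
Definition is_wattle : Prop :=
  exists t (c : T -> 'I_t), [/\ (2 <= t)%N,
    forall i : 'I_t, (2 <= #|[set x | c x == i]|)%N,
    forall x y, c x = c y -> x >=< y &
    forall x y, c x != c y ->
      (x < y) = [&& ((c x).+1 == c y)%N,
                    [forall z, (c z == c x) ==> (x <= z)] &
                    [forall z, (c z == c y) ==> (z <= y)]]].
End Defs.

From mathcomp Require Import all_boot all_order zify.
Set Implicit Arguments. Unset Strict Implicit. Unset Printing Implicit Defensive.
Import Order.Theory.

(* Enumerate S along the path as g 0, ..., g (n-1) and record whether each edge
   {g k, g k.+1} goes up.  Since the Hasse graph is a path, g i < g j exactly
   when the path from i to j goes up at every step, so the order is determined
   by these orientations.  The junction points are the interior vertices where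
   the orientation turns, and their components are maximal runs of consecutive
   turns.  Along a run the orientation alternates, so all runs are even iff
   either there is no turn (S is a chain) or the edges of one orientation are
   isolated interior edges.  In the latter case the maximal segments of the
   other orientation are the chains Z_1, ..., Z_t and the isolated edges are the
   covering relations min Z_i < max Z_(i+1); conversely the chains of a wattle
   are segments of the path joined by such edges. *)

Lemma lt_covers_ind d (T : finPOrderType d) (R : T -> T -> Prop) :
  (forall x y z, R x y -> R y z -> R x z) -> (forall x y, covers y x -> R x y) ->
  forall x y, (x < y)%O -> R x y.
Proof.
move=> Rtr Rcov x y; have [N] := ubnP #|[set z | (x < z < y)%O]|.
elim: N x y => // N IH x y ltN xy.
case: (boolP [exists z, (x < z < y)%O]) => [/existsP[z /andP[xz zy]]|none].
  apply: (Rtr _ z); apply: IH => //; apply: leq_trans (proper_card _) ltN.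
    apply/properP; split; last by exists z; rewrite !inE ?xz ?zy ?ltxx ?andbF.
    by apply/subsetP=> w; rewrite !inE => /andP[-> /lt_trans->].
  apply/properP; split; last by exists z; rewrite !inE ?xz ?zy ?ltxx.
  by apply/subsetP=> w; rewrite !inE => /andP[/(lt_trans xz)-> ->].
by apply: Rcov; rewrite /covers xy -negb_exists.
Qed.

Lemma junction_adj_sym d (T : finPOrderType d) : symmetric (junction_adj (T:=T)).
Proof. by move=> x y; rewrite /junction_adj /hasse_adj orbC andbCA. Qed.

Lemma junction_component_connect d (T : finPOrderType d) (x y : T) :
  connect (junction_adj (T:=T)) x y -> junction_component x = junction_component y.
Proof.
move=> xy; apply/setP=> z; rewrite !inE.
by rewrite (same_connect (sym_connect_sym (@junction_adj_sym _ T)) xy).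
Qed.

Section TurnSequences.
(* [u k] is the orientation of the edge between the vertices [k] and [k.+1] of a
   path with [n] vertices. *)
Variables (n : nat) (u : nat -> bool).

Definition turn k := [&& 0 < k, k.+1 < n & u k.-1 != u k].

Fixpoint run k := if k is k'.+1 then (if turn k then (run k').+1 else 0) else 0.

Definition even_runs := forall k, turn k -> ~~ turn k.+1 -> ~~ odd (run k).

Definition chain_pattern := forall k, k.+2 < n -> u k = u k.+1.

(* The [b]-edges are the covering relations between consecutive chains of a wattle. *)
Definition wattle_pattern b := (exists2 k, k.+1 < n & u k = b) /\
  forall k, k.+1 < n -> u k = b -> [/\ 0 < k, k.+2 < n, u k.-1 != b & u k.+1 != b].

Lemma turn_lt k : turn k -> k.+1 < n.
Proof. by case/and3P. Qed.

Lemma turnS k : k.+2 < n -> turn k.+1 = (u k != u k.+1).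
Proof. by move=> kn; rewrite /turn kn. Qed.

Lemma runS k : run k.+1 = if turn k.+1 then (run k).+1 else 0.
Proof. by []. Qed.

Lemma run_gt0 k : (0 < run k) = turn k.
Proof. by case: k => [|k] //=; case: ifP. Qed.

Lemma run_le k : run k <= k.
Proof. by elim: k => //= k IH; case: ifP. Qed.

Lemma run_spec k j : j <= k -> (k - run k < j) <-> (forall m, j <= m <= k -> turn m).
Proof.
elim: k j => [|k IH] j jk.
  have -> : j = 0 by lia.
  by split=> // /(_ 0 (leqnn 0)).
case: (boolP (turn k.+1)) => Tk; last first.
  rewrite runS (negbTE Tk) subn0; split=> [|H]; first lia.
  by have := H k.+1; rewrite (negbTE Tk) jk leqnn => /(_ isT).
rewrite runS Tk; case: (ltnP k j) => kj.
  have -> : j = k.+1 by lia.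
  split=> [_ m mk|_]; last lia.
  by have -> : m = k.+1 by lia.
rewrite subSS (IH j kj).
split=> Hj m /andP[jm mk]; last by apply: Hj; lia.
by case: (m =P k.+1) => [->//|?]; apply: Hj; lia.
Qed.

Lemma run_start_not_turn k : ~~ turn (k - run k).
Proof.
apply/negP=> T0; have := run_le k => rk.
have /(run_spec (leq_subr _ k)) : forall m, k - run k <= m <= k -> turn m.
  move=> m /andP[lo hi]; case: (m =P k - run k) => [->//|ne].
  by apply: ((run_spec hi).1 _ m); lia.
by rewrite ltnn.
Qed.

Lemma turn_run_end i : turn i ->
  exists k, [/\ i <= k, forall m, i <= m <= k -> turn m & ~~ turn k.+1].
Proof.
have [N] := ubnP (n - i); elim: N i => // N IH i iN Ti.
case: (boolP (turn i.+1)) => [Ti1|nTi1]; last first.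
  by exists i; split=> // m mi; have -> : m = i by lia.
have := turn_lt Ti => ?; have [|k [ik Hk nTk]] := IH i.+1 _ Ti1; first lia.
exists k; split=> [|m /andP[im mk]|//]; first lia.
by case: (m =P i) => [->//|?]; apply: Hk; lia.
Qed.

Lemma chain_pattern_const : chain_pattern -> forall k, k.+1 < n -> u k = u 0.
Proof. by move=> C; elim=> // k IH kn; rewrite -C ?IH //; lia. Qed.

Lemma wattle_run_parity b : wattle_pattern b ->
  forall k, k.+1 < n -> (u k == b) = odd (run k).
Proof.
move=> [_ W]; elim=> [|k IH] kn.
  by apply/negbTE/eqP=> /(W 0 kn) [].
rewrite runS turnS //; case: (boolP (u k != u k.+1)) => [ne|/negPn/eqP e] /=.
  by rewrite -(IH (ltnW kn)); clear W IH; move: ne; case: (u k); case: (u k.+1); case: b.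
by rewrite -e; apply/negbTE/eqP=> /[dup] ub /(W k (ltnW kn)) [_ _ _]; rewrite -e ub eqxx.
Qed.

Lemma even_run_parity : even_runs -> forall k, k.+1 < n -> (u k == ~~ u 0) = odd (run k).
Proof.
move=> E; elim=> [|k IH] kn; first by case: (u 0).
rewrite runS turnS //; case: (boolP (u k != u k.+1)) => [ne|/negPn/eqP e] /=.
  by rewrite -(IH (ltnW kn)); move: ne; case: (u k); case: (u k.+1); case: (u 0).
rewrite -e (IH (ltnW kn)); case: (posnP (run k)) => [->//|].
by rewrite run_gt0 => Tk; apply/negbTE/E; rewrite // turnS // e negbK.
Qed.

Lemma even_runs_chain : chain_pattern -> even_runs.
Proof.
move=> C k /and3P[k0 kn]; rewrite -[in u k](prednK k0) -C ?eqxx //; lia.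
Qed.

Lemma even_runs_wattle b : wattle_pattern b -> even_runs.
Proof.
move=> W k Tk nTk; apply/negP; rewrite -(wattle_run_parity W (turn_lt Tk)) => /eqP ub.
case: (W.2 k (turn_lt Tk) ub) => _ kn _ u1.
by move: nTk; rewrite turnS // ub eq_sym u1.
Qed.

Lemma pattern_even_runs : even_runs -> chain_pattern \/ wattle_pattern (~~ u 0).
Proof.
move=> E; case: (boolP [exists k : 'I_n.-1, u k == ~~ u 0]) => [/existsP[k /eqP uk]|].
  right; split; first by exists k => //; have := ltn_ord k; lia.
  move=> {uk}k kn uk; have := even_run_parity E kn; rewrite uk eqxx => /esym odd_run.
  have Tk : turn k by rewrite -run_gt0; move: odd_run; case: (run k).
  case: (boolP (turn k.+1)) => [Tk1|nTk1]; last by rewrite (negbTE (E k Tk nTk1)) in odd_run.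
  case/and3P: Tk => k0 _; case/and3P: Tk1 => _ kn2 /=; rewrite -uk eq_sym.
  by move=> -> ->.
rewrite negb_exists => /forallP nU; left=> k kn.
have u0 m : m.+1 < n -> u m = u 0.
  by move=> mn; have := nU (Ordinal (ltac:(lia) : m < n.-1)); case: (u m); case: (u 0).
by rewrite !u0 //; lia.
Qed.

Lemma even_runsP : even_runs <-> chain_pattern \/ exists b, wattle_pattern b.
Proof.
split=> [/pattern_even_runs [|W]|[/even_runs_chain //|[b /even_runs_wattle //]]].
  by left.
by right; exists (~~ u 0).
Qed.

End TurnSequences.

Lemma wattle_pattern_rev n (u v : nat -> bool) b :
  (forall k, k.+1 < n -> v k = ~~ u (n - k.+2)) ->
  wattle_pattern n u b -> wattle_pattern n v (~~ b).
Proof.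
move=> vE [[k kn uk] W]; split.
  exists (n - k.+2); first lia.
  by rewrite vE; [rewrite (_ : n - _ = k) ?uk //| ]; lia.
move=> j jn; rewrite vE // => /negb_inj ub.
have [|j0 jn2 u1 u2] := W (n - j.+2) _ ub; first lia.
split; [lia | lia | rewrite vE | rewrite vE]; rewrite ?(inj_eq negb_inj); try lia.
  by rewrite (_ : n - _ = (n - j.+2).+1) //; lia.
by rewrite (_ : n - _ = (n - j.+2).-1) //; lia.
Qed.

Section HassePath.
(* [g] enumerates the vertices along the path and [h] is its inverse; [g k] is a
   junk value for [k >= n]. *)
Variables (d : Order.disp_t) (T : finPOrderType d) (n : nat).
Variables (g : nat -> T) (h : T -> nat).
Hypotheses (h_lt : forall x, h x < n) (hK : cancel h g).
Hypothesis gK : forall k, k < n -> h (g k) = k.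
Hypothesis g_adj : forall i j, i < n -> j < n ->
  hasse_adj (g i) (g j) = (i.+1 == j) || (j.+1 == i).

Lemma g_inj i j : i < n -> j < n -> g i = g j -> i = j.
Proof. by move=> iN jN e; rewrite -(gK iN) -(gK jN) e. Qed.

Lemma g_surj x : exists2 i, i < n & x = g i.
Proof. by exists (h x); rewrite ?hK. Qed.

Definition up k := (g k < g k.+1)%O.

Lemma gt_g_succ k : k.+1 < n -> (g k.+1 < g k)%O = ~~ up k.
Proof.
move=> kn; have := g_adj (ltnW kn) kn; rewrite eqxx /hasse_adj /up.
by case/orP=> /andP[lt _]; rewrite lt (lt_gtF lt).
Qed.

Lemma covers_g i j : i < n -> j < n ->
  covers (g i) (g j) = (g j < g i)%O && ((i.+1 == j) || (j.+1 == i)).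
Proof.
move=> iN jN; rewrite -g_adj // /hasse_adj.
apply/idP/andP=> [c|[lt /orP[//|/andP[lt' _]]]]; first by case/andP: (c) => ->; rewrite c.
by rewrite (lt_gtF lt) in lt'.
Qed.

Definition oriented i j b := forall k, i <= k < j -> up k = b.

Lemma lt_g_oriented i j b : i < j -> j < n -> oriented i j b ->
  if b then (g i < g j)%O else (g j < g i)%O.
Proof.
move=> ij jn M; pose D := [pred k | i <= k <= j].
have Dconv : {in D &, forall a c k, a < k < c -> k \in D}.
  by move=> a c aD cD k akc; move: aD cD; rewrite !inE; lia.
have iD : i \in D by rewrite inE leqnn ltnW.
have jD : j \in D by rewrite inE leqnn ltnW.
case: b M => M.
  apply: (Order.NatMonotonyTheory.homo_ltn_lt_in Dconv) => // k; rewrite !inE => kD k1D.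
  by apply: M; lia.
apply: (Order.NatMonotonyTheory.nhomo_ltn_lt_in Dconv) => // k; rewrite !inE => kD k1D.
by rewrite gt_g_succ ?M //; lia.
Qed.

Lemma lt_g_triple k : k.+2 < n -> up k = up k.+1 ->
  if up k then (g k < g k.+1 < g k.+2)%O else (g k.+2 < g k.+1 < g k)%O.
Proof.
move=> kn e; case uk: (up k) e => /esym uk1; first exact/andP.
by rewrite !gt_g_succ ?uk ?uk1 //; lia.
Qed.

Definition ascent i j := (i < j /\ oriented i j true) \/ (j < i /\ oriented j i false).

Lemma ascent_trans i j k : ascent i j -> ascent j k -> ascent i k.
Proof.
case=> [[ij Mij]|[ji Mji]] [[jk Mjk]|[kj Mkj]].
- left; split=> [|m hm]; first lia.
  by case: (ltnP m j) => ?; [apply: Mij | apply: Mjk]; lia.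
- by have := Mij j.-1; rewrite Mkj //; lia.
- by have := Mji j; rewrite Mjk //; lia.
- right; split=> [|m hm]; first lia.
  by case: (ltnP m j) => ?; [apply: Mkj | apply: Mji]; lia.
Qed.

Lemma ascent_lt_g i j : i < n -> j < n -> (g i < g j)%O -> ascent i j.
Proof.
move=> iN jN; rewrite -{2}(gK iN) -{2}(gK jN).
apply: (lt_covers_ind (R := fun x y => ascent (h x) (h y))).
  by move=> x y z; apply: ascent_trans.
move=> x y; rewrite -{1}(hK x) -{1}(hK y) covers_g // => /andP[lt /orP[] /eqP e].
  right; split=> [|k hk]; first lia.
  have -> : k = h y by lia.
  by rewrite /up e (lt_gtF lt).
left; split=> [|k hk]; first lia.
have -> : k = h x by lia.
by rewrite /up e.
Qed.

Lemma comparable_g i j : i <= j -> j < n -> (g i >=< g j)%O <-> exists b, oriented i j b.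
Proof.
move=> ij jn; case: (ltngtP i j) ij => // [{}ij _|-> _]; last first.
  by split=> _; [exists true => k; lia | exact: comparablexx].
split=> [|[b /(lt_g_oriented ij jn)]]; last first.
  by case: b => /lt_comparable //; rewrite comparable_sym.
have iN := ltn_trans ij jn.
case/comparable_ltgtP=> [lt|gt|e]; last by have := g_inj iN jn e; lia.
  by case: (ascent_lt_g iN jn lt) => [[_ M]|[]]; [exists true | lia].
by case: (ascent_lt_g jn iN gt) => [[]|[_ M]]; [lia | exists false].
Qed.

Lemma chain_patternP : is_chain T <-> chain_pattern n up.
Proof.
split=> [C k kn|C x y].
  have [b M] := (comparable_g (leqW (leqnSn k)) kn).1 (C _ _).
  by rewrite !M //; lia.
wlog: x y / h x <= h y => [H|xy].
  by case: (leqP (h x) (h y)) => [/H //|/ltnW /H]; rewrite comparable_sym.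
rewrite -[x]hK -[y]hK; apply/(comparable_g xy (h_lt y)).
exists (up 0) => k /andP[_ ky]; apply: (chain_pattern_const C).
by have := h_lt y; lia.
Qed.

Lemma card_gt1_neighbours i (S : {set T}) : i < n ->
  (forall y, y \in S -> hasse_adj (g i) y) ->
  (1 < #|S|) = [&& 0 < i, i.+1 < n, g i.-1 \in S & g i.+1 \in S].
Proof.
move=> iN adjS; apply/idP/idP=> [/card_gt1P [y1 [y2 [S1 S2 ne]]]|]; last first.
  case/and4P=> i0 i1 Sl Sr; apply/card_gt1P; exists (g i.-1), (g i.+1).
  by split=> //; apply/eqP=> /g_inj; lia.
have near y : y \in S -> (i.+1 == h y) || ((h y).+1 == i).
  by move/adjS; rewrite -{1}(hK y) g_adj.
have hne : h y1 != h y2 by apply: contra ne => /eqP e; rewrite -(hK y1) e hK.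
have inS k : (k == h y1) || (k == h y2) -> g k \in S by case/orP=> /eqP->; rewrite hK.
have := near _ S1; have := near _ S2; have := h_lt y1; have := h_lt y2.
by move=> *; apply/and4P; split; try apply: inS; lia.
Qed.

Lemma junction_g i : i < n -> (g i \in junction T) = turn n up i.
Proof.
move=> iN; rewrite inE !(@card_gt1_neighbours i) //; first last.
- by move=> y; rewrite inE /hasse_adj => ->.
- by move=> y; rewrite inE /hasse_adj => ->; rewrite orbT.
rewrite /turn; case: (posnP i) => [->|i0] //; case: (ltnP i.+1 n) => i1; last first.
  by rewrite !andbF.
have i1' : i.-1 < n by lia.
rewrite !inE !covers_g // prednK // !eqxx !orbT !andbT /=.
have ui : (g i.-1 < g i)%O = up i.-1 by rewrite /up prednK.
have di : (g i < g i.-1)%O = ~~ up i.-1 by rewrite -gt_g_succ prednK.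
by rewrite ui di gt_g_succ // -/(up i); case: (up i.-1); case: (up i).
Qed.

Lemma junction_adj_g i j : i < n -> j < n ->
  junction_adj (g i) (g j) = [&& turn n up i, turn n up j & (i.+1 == j) || (j.+1 == i)].
Proof. by move=> iN jN; rewrite /junction_adj !junction_g // g_adj. Qed.

Lemma connect_turns i j : i <= j -> j < n -> (forall m, i <= m <= j -> turn n up m) ->
  connect (junction_adj (T:=T)) (g i) (g j).
Proof.
elim: j => [|j IH] ij jn Tij; first by have -> : i = 0 by lia.
have [->|ne] := eqVneq i j.+1; first exact: connect0.
apply: connect_trans (IH _ _ _) (connect1 _); try lia.
  by move=> m hm; apply: Tij; lia.
by rewrite junction_adj_g ?Tij ?eqxx //; lia.
Qed.

Lemma junction_component_end k y : turn n up k -> ~~ turn n up k.+1 ->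
  (y \in junction_component (g k)) = (k - run n up k < h y <= k).
Proof.
move=> Tk nTk; have kn := ltnW (turn_lt Tk).
pose a := [pred x | k - run n up k < h x <= k].
have a_step x z : junction_adj x z -> x \in a -> z \in a.
  rewrite -[x]hK -[z]hK junction_adj_g ?h_lt // !inE !(gK (h_lt _)).
  move=> /and3P[_ Tz /orP[] /eqP e] ax.
    case: (h x =P k) => [ex|ne]; last lia.
    by move: Tz nTk; rewrite -e ex => ->.
  have := run_start_not_turn n up k; case: (h z =P k - run n up k) => [<-|]; last lia.
  by rewrite Tz.
have closed_a : closed (junction_adj (T:=T)) a.
  by move=> x z xz; apply/idP/idP; apply: a_step; rewrite // junction_adj_sym.
rewrite inE; apply/andP/idP=> [[_ /(closed_connect closed_a)]|ay].
  rewrite !inE gK // => <-; have := run_le n up k.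
  by have := run_gt0 n up k; rewrite Tk; lia.
have [lo hi] := andP ay; have Ty := (run_spec n up hi).1 lo.
rewrite -(hK y) junction_g ?Ty ?leqnn //.
by rewrite (sym_connect_sym (@junction_adj_sym _ T)); split=> //; apply: connect_turns.
Qed.

Lemma card_junction_component_end k : turn n up k -> ~~ turn n up k.+1 ->
  #|junction_component (g k)| = run n up k.
Proof.
move=> Tk nTk; have kn := turn_lt Tk; have rk := run_le n up k.
have E : junction_component (g k) =i [seq g j | j <- iota (k.+1 - run n up k) (run n up k)].
  move=> y; rewrite junction_component_end //; apply/idP/mapP=> [yk|[j]].
    by exists (h y); rewrite ?hK // mem_iota; lia.
  by rewrite mem_iota => jk ->; rewrite gK; lia.
rewrite (eq_card E) (card_uniqP _) ?size_map ?size_iota //.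
rewrite map_inj_in_uniq ?iota_uniq // => a b; rewrite !mem_iota => ha hb.
by apply: g_inj; lia.
Qed.

Lemma even_junction_componentsP : even_junction_components T <-> even_runs n up.
Proof.
split=> [E k Tk nTk|E x].
  have := E (g k); rewrite junction_g ?(ltnW (turn_lt Tk)) // card_junction_component_end //.
  by apply.
rewrite -(hK x) junction_g // => Tx.
have [k [xk Txk nTk]] := turn_run_end Tx.
have Tk : turn n up k by apply: Txk; lia.
rewrite (junction_component_connect (connect_turns xk _ Txk)); last exact: ltnW (turn_lt Tk).
by rewrite card_junction_component_end //; apply: E.
Qed.

Section WattleClasses.
Variables (t : nat) (c : T -> 'I_t).
Hypotheses (t_ge2 : 2 <= t) (class_ge2 : forall i, 2 <= #|[set x | c x == i]|).
Hypothesis class_chain : forall x y, c x = c y -> (x >=< y)%O.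
Hypothesis class_lt : forall x y, c x != c y ->
  (x < y)%O = [&& (c x).+1 == c y, [forall z, (c z == c x) ==> (x <= z)%O]
                                  & [forall z, (c z == c y) ==> (z <= y)%O]].

Lemma lt_class_min x y z : c x != c y -> (x < y)%O -> c z = c x -> (x <= z)%O.
Proof.
by move=> ne; rewrite class_lt // => /and3P[_ /forallP/(_ z) + _] e; rewrite e eqxx.
Qed.

Lemma lt_class_max x y z : c x != c y -> (x < y)%O -> c z = c y -> (z <= y)%O.
Proof.
by move=> ne; rewrite class_lt // => /and3P[_ _ /forallP/(_ z)] + e; rewrite e eqxx.
Qed.

Lemma class_left x y z : (x < y)%O -> (y < z)%O -> c x = c y -> c z = c y.
Proof.
move=> xy yz exy; apply/eqP/negP => /negP; rewrite eq_sym => nyz.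
by have := lt_class_min nyz yz exy; rewrite lt_geF.
Qed.

Lemma class_right x y z : (x < y)%O -> (y < z)%O -> c y = c z -> c x = c y.
Proof.
move=> xy yz eyz; apply/eqP/negP => /negP nxy.
by have := lt_class_max nxy xy (esym eyz); rewrite lt_geF.
Qed.

Lemma class_mid x y z : (x < y)%O -> (y < z)%O -> c x = c z -> c y = c x.
Proof.
move=> xy yz exz; apply/eqP/negP => /negP nyx; rewrite eq_sym in nyx.
have nyz : c y != c z by rewrite -exz eq_sym.
have [w1 [w2 [w1y w2y ne]]] := card_gt1P (class_ge2 (c y)).
suff yw w : w \in [set x | c x == c y] -> w = y by rewrite (yw _ w1y) (yw _ w2y) eqxx in ne.
rewrite inE => /eqP wc; apply/le_anti; rewrite (lt_class_max nyx xy wc).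
exact: lt_class_min nyz yz wc.
Qed.

Definition bridge k := c (g k) != c (g k.+1).

Lemma class_convex a m b : a < m < b -> b < n -> c (g a) = c (g b) -> c (g m) = c (g a).
Proof.
move=> /andP[am mb] bn e.
have [b0 M] := (comparable_g (ltnW (ltn_trans am mb)) bn).1 (class_chain e).
have Osub i j : a <= i -> j <= b -> oriented i j b0 by move=> ? ? k ?; apply: M; lia.
have := lt_g_oriented am (ltn_trans mb bn) (Osub _ _ (leqnn a) (ltnW mb)).
have := lt_g_oriented mb bn (Osub _ _ (ltnW am) (leqnn b)).
case: b0 {M Osub} => mb' am'; first exact: class_mid am' mb' e.
by rewrite e; apply: class_mid mb' am' (esym e).
Qed.

Lemma class_neighbour k : k < n ->
  (0 < k /\ c (g k.-1) = c (g k)) \/ (k.+1 < n /\ c (g k.+1) = c (g k)).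
Proof.
move=> kn; have [z1 [z2 [z1k z2k ne]]] := card_gt1P (class_ge2 (c (g k))).
have [z [zk nz]] : exists z, z \in [set x | c x == c (g k)] /\ z != g k.
  by case: (eqVneq z1 (g k)) => [e|n1]; [exists z2; split; rewrite // -e eq_sym | exists z1].
rewrite inE -(hK z) in zk nz; move/eqP: zk => zk; have zn := h_lt z.
case: (ltngtP (h z) k) => [zk'|kz|e]; last by rewrite e eqxx in nz.
  left; split; first lia.
  have [<-//|ne'] := eqVneq (h z) k.-1.
  by rewrite (@class_convex (h z) k.-1 k) //; lia.
right; split; first lia.
have [<-//|ne'] := eqVneq (h z) k.+1.
by rewrite (@class_convex k k.+1 (h z)) //; lia.
Qed.

Lemma bridge_neighbours k : k.+1 < n -> bridge k ->
  [/\ 0 < k, k.+2 < n, ~~ bridge k.-1 & ~~ bridge k.+1].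
Proof.
move=> kn bk.
case: (class_neighbour (ltnW kn)) => [[k0 e1]|[_ e]]; last by rewrite /bridge e eqxx in bk.
case: (class_neighbour kn) => /= [[_ e]|[k2 e2]]; first by rewrite /bridge e eqxx in bk.
by rewrite /bridge prednK // e1 e2 !eqxx.
Qed.

Lemma up_bridge k : k.+1 < n -> bridge k -> up k.-1 != up k /\ up k.+1 != up k.
Proof.
move=> kn bk; have [k0 k2 /negPn/eqP e1 /negPn/eqP e2] := bridge_neighbours kn bk.
rewrite prednK // in e1; move/eqP: bk => bk.
split; apply/eqP=> e.
  have := @lt_g_triple k.-1; rewrite prednK // => /(_ kn e).
  case: (up _) => /andP[lt1 lt2]; first exact/bk/esym/(class_left lt1 lt2 e1).
  exact/bk/esym/(class_right lt1 lt2 (esym e1)).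
have := lt_g_triple k2 (esym e); case: (up _) => /andP[lt1 lt2].
  exact: bk (class_right lt1 lt2 e2).
exact: bk (class_left lt1 lt2 (esym e2)).
Qed.

Lemma up_same_class k : k.+2 < n -> ~~ bridge k -> ~~ bridge k.+1 -> up k.+1 = up k.
Proof.
move=> kn /negPn/eqP e1 /negPn/eqP e2.
have [b M] := (comparable_g (leqW (leqnSn k)) kn).1 (class_chain (etrans e1 e2)).
by rewrite !M //; lia.
Qed.

Lemma bridge_up k : k.+1 < n -> bridge k = (up k != up 0).
Proof.
elim: k => [|k IH] kn.
  by rewrite eqxx; case: (class_neighbour (ltnW kn)) => [[]//|[_ e]]; rewrite /bridge e eqxx.
case: (boolP (bridge k)) (IH (ltnW kn)) => bk /esym IHk.
  have [_ _ _ /negbTE ->] := bridge_neighbours (ltnW kn) bk.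
  have [_ u] := up_bridge (ltnW kn) bk.
  by move: u IHk; case: (up k.+1); case: (up k); case: (up 0).
have e0 : up k = up 0 by apply/eqP/negbFE.
case: (boolP (bridge k.+1)) => bk1; last by rewrite up_same_class // e0 eqxx.
by have [u _] := up_bridge kn bk1; rewrite -e0 eq_sym.
Qed.

Lemma exists_bridge : exists2 k, k.+1 < n & bridge k.
Proof.
have [i1 [i2 [_ _ ne]]] : exists i1 i2 : 'I_t, [/\ true, true & i1 != i2].
  by apply/card_gt1P; rewrite card_ord.
have [i ni] : exists i, i != c (g 0).
  by case: (eqVneq i1 (c (g 0))) => [e|n1]; [exists i2; rewrite -e eq_sym | exists i1].
have [z [_ [zi _ _]]] := card_gt1P (class_ge2 i).
move: zi; rewrite inE -(hK z) => /eqP zi; rewrite -zi in ni.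
elim: (h z) (h_lt z) ni => [|j IH] jn nj; first by rewrite eqxx in nj.
have [e|ne'] := eqVneq (c (g 0)) (c (g j)); last by apply: IH; rewrite 1?eq_sym //; lia.
by exists j => //; rewrite /bridge -e eq_sym.
Qed.

Lemma wattle_pattern_classes : wattle_pattern n up (~~ up 0).
Proof.
split.
  have [k kn bk] := exists_bridge; exists k => //.
  by move: bk; rewrite bridge_up //; case: (up k); case: (up 0).
move=> k kn uk; have bk : bridge k by rewrite bridge_up // uk; case: (up 0).
have [k0 k2 nb1 nb2] := bridge_neighbours kn bk.
rewrite !bridge_up in nb1 nb2; try lia.
by split=> //; [move: nb1 | move: nb2]; case: (up _); case: (up 0).
Qed.

End WattleClasses.

Lemma wattle_pattern_of_wattle : is_wattle T -> exists b, wattle_pattern n up b.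
Proof.
by case=> t [c [t2 sz ch lt]]; exists (~~ up 0); apply: (wattle_pattern_classes t2 sz ch lt).
Qed.

Section WattleOfPattern.
Hypothesis W : wattle_pattern n up true.

Definition ups k := count up (iota 0 k).

Lemma upsS k : ups k.+1 = ups k + up k.
Proof. by rewrite /ups -addn1 iotaD count_cat /= addn0. Qed.

Lemma upsD i j : i <= j -> ups j = ups i + count up (iota i (j - i)).
Proof. by move=> ij; rewrite /ups -count_cat -iotaD subnKC. Qed.

Lemma ups_mono i j : i <= j -> ups i <= ups j.
Proof. by move=> ij; rewrite (upsD ij) leq_addr. Qed.

Lemma ups_eq_oriented i j : i <= j -> ups i = ups j <-> oriented i j false.
Proof.
move=> ij; rewrite (upsD ij) -[X in X = _]addn0; split=> [/addnI/esym/eqP|M].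
  rewrite eqn0Ngt -has_count => /hasPn M k /andP[ik kj].
  by apply/negbTE/M; rewrite mem_iota; lia.
congr (_ + _); apply/esym/eqP; rewrite eqn0Ngt -has_count; apply/hasPn=> k.
by rewrite mem_iota => /andP[ik kj]; rewrite M //; lia.
Qed.

Lemma ups_step v j : v < ups j -> exists e, [/\ e < j, up e & ups e = v].
Proof.
elim: j => [//|j IH]; rewrite upsS; case: (ltnP v (ups j)) => [/IH [e [ej ue ce]] _|vj].
  by exists e; split=> //; lia.
by case uj: (up j) => /= lt; [exists j; split=> //; lia | lia].
Qed.

Lemma down_edge_at v : v <= ups n.-1 -> exists k, [/\ k.+1 < n, ~~ up k & ups k = v].
Proof.
have [[k0 k0n _] Wi] := W; case: v => [_|v vN].
  exists 0; split=> //; first lia.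
  by apply/negP=> u0; have [] := Wi 0 ltac:(lia) u0.
have [e [en ue ce]] := ups_step vN; have [_ e2 _ u1] := Wi e ltac:(lia) ue.
exists e.+1; split=> //; first by move: u1; case: (up _).
by rewrite upsS ue ce addn1.
Qed.

Lemma lt_g_ups_neq i j : i < n -> j < n -> ups i != ups j ->
  (g i < g j)%O <-> j = i.+1 /\ up i.
Proof.
move=> iN jN ne; split=> [/(ascent_lt_g iN jN) [[ij M]|[ji M]]|[-> //]].
  have ui : up i by apply: M; lia.
  have [->//|ne'] := eqVneq j i.+1.
  by have [_ _ _] := W.2 i ltac:(lia) ui; rewrite M //; lia.
by move: ne; rewrite ((ups_eq_oriented (ltnW ji)).2 M) eqxx.
Qed.

Lemma min_in_class i : i < n ->
  (forall m, m < n -> ups m = ups i -> (g i <= g m)%O) <-> (i.+1 < n -> up i).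
Proof.
move=> iN; split=> [Hmin i1|Hlast m mN e].
  apply/negPn/negP=> ui; have := Hmin i.+1 i1; rewrite upsS (negbTE ui) addn0.
  by move=> /(_ erefl); rewrite lt_geF // gt_g_succ.
case: (ltnP i m) => [im|mi].
  by have := ups_mono im; rewrite upsS Hlast //=; lia.
have [->|ne] := eqVneq m i; first exact: lexx.
have mi' : m < i by lia.
exact: ltW (lt_g_oriented mi' iN ((ups_eq_oriented (ltnW mi')).1 e)).
Qed.

Lemma max_in_class j : j < n ->
  (forall m, m < n -> ups m = ups j -> (g m <= g j)%O) <-> (0 < j -> up j.-1).
Proof.
move=> jN; split=> [Hmax j0|Hfirst m mN e].
  apply/negPn/negP=> uj; have := Hmax j.-1 ltac:(lia).
  rewrite -[in ups j](prednK j0) upsS (negbTE uj) addn0 => /(_ erefl).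
  by rewrite lt_geF // -{1}(prednK j0) gt_g_succ // prednK.
case: (ltnP m j) => [mj|jm].
  have j0 : 0 < j by lia.
  have := ups_mono (ltac:(lia) : m <= j.-1); have := upsS j.-1.
  by rewrite prednK // Hfirst //=; lia.
have [->|ne] := eqVneq m j; first exact: lexx.
have jm' : j < m by lia.
exact: ltW (lt_g_oriented jm' mN ((ups_eq_oriented (ltnW jm')).1 (esym e))).
Qed.

(* The chains are the maximal descending segments, numbered by the number of
   ascending edges before them. *)
Definition chain_index (x : T) : 'I_(ups n.-1).+1 := inord (ups (h x)).

Lemma chain_index_g i : i < n -> chain_index (g i) = ups i :> nat.
Proof. by move=> iN; rewrite inordK gK // ltnS ups_mono //; lia. Qed.

Lemma eq_chain_index i j : i < n -> j < n ->
  (chain_index (g i) == chain_index (g j)) = (ups i == ups j).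
Proof. by move=> iN jN; rewrite -val_eqE /= !chain_index_g. Qed.

Lemma chain_index_min i : i < n ->
  [forall z, (chain_index z == chain_index (g i)) ==> (g i <= z)%O] = (i.+1 < n) ==> up i.
Proof.
move=> iN; apply/forallP/implyP=> [H|/(min_in_class iN) H z].
  by apply/(min_in_class iN) => m mN e; move: (H (g m)); rewrite eq_chain_index // e eqxx.
by case: (g_surj z) => m mN ->; apply/implyP; rewrite eq_chain_index // => /eqP; apply: H.
Qed.

Lemma chain_index_max j : j < n ->
  [forall z, (chain_index z == chain_index (g j)) ==> (z <= g j)%O] = (0 < j) ==> up j.-1.
Proof.
move=> jN; apply/forallP/implyP=> [H|/(max_in_class jN) H z].
  by apply/(max_in_class jN) => m mN e; move: (H (g m)); rewrite eq_chain_index // e eqxx.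
by case: (g_surj z) => m mN ->; apply/implyP; rewrite eq_chain_index // => /eqP; apply: H.
Qed.

Lemma lt_g_chain_index i j : i < n -> j < n -> ups i != ups j ->
  (g i < g j)%O = [&& (ups i).+1 == ups j, (i.+1 < n) ==> up i & (0 < j) ==> up j.-1].
Proof.
move=> iN jN ne; apply/idP/idP=> [/(lt_g_ups_neq iN jN ne) [-> ui]|].
  by rewrite upsS ui addn1 eqxx !implybT.
case/and3P=> /eqP e /implyP ui /implyP uj.
have ij : i < j by rewrite ltnNge; apply/negP=> /ups_mono; lia.
have u1 := ui ltac:(lia); have u2 := uj ltac:(lia).
have [-> //|ne'] := eqVneq j i.+1.
have := ups_mono (ltac:(lia) : i.+1 <= j.-1); have := upsS j.-1; have := upsS i.
by rewrite prednK ?u1 ?u2 /=; lia.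
Qed.

Lemma wattle_of_pattern : is_wattle T.
Proof.
have [[k0 k0n u0] _] := W.
exists (ups n.-1).+1, chain_index; split.
- by have := @ups_mono k0.+1 n.-1 ltac:(lia); rewrite upsS u0 /=; lia.
- move=> v; have [k [kn uk ck]] := down_edge_at (ltn_ord v).
  apply/card_gt1P; exists (g k), (g k.+1); rewrite !inE -!val_eqE /=.
  rewrite !chain_index_g ?upsS ?(negbTE uk) ?addn0 ?ck ?eqxx; try lia.
  by split=> //; apply/eqP=> /g_inj; lia.
- move=> x y; case: (g_surj x) => i iN ->; case: (g_surj y) => j jN ->.
  move/eqP; rewrite eq_chain_index // => /eqP e.
  wlog ij : i j iN jN e / i <= j => [H|].
    by case: (leqP i j) => [|/ltnW] ij; [|rewrite comparable_sym]; apply: H.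
  by apply/(comparable_g ij jN); exists false; apply/ups_eq_oriented.
move=> x y; case: (g_surj x) => i iN ->; case: (g_surj y) => j jN ->.
rewrite eq_chain_index // => ne.
by rewrite lt_g_chain_index // chain_index_min // chain_index_max // !chain_index_g.
Qed.

End WattleOfPattern.

End HassePath.

Lemma wattle_patternP d (T : finPOrderType d) n (g : nat -> T) h :
  (forall x, h x < n) -> cancel h g -> (forall k, k < n -> h (g k) = k) ->
  (forall i j, i < n -> j < n -> hasse_adj (g i) (g j) = (i.+1 == j) || (j.+1 == i)) ->
  is_wattle T <-> exists b, wattle_pattern n (up g) b.
Proof.
move=> h_lt hK gK g_adj; split; first exact: wattle_pattern_of_wattle.
case=> -[]; first exact: wattle_of_pattern.
(* Reversing the enumeration swaps the two orientations. *)
pose g' k := g (n.-1 - k); pose h' x := n.-1 - h x.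
have g'_adj i j : i < n -> j < n -> hasse_adj (g' i) (g' j) = (i.+1 == j) || (j.+1 == i).
  move=> iN jN; rewrite /g' g_adj; [|lia|lia].
  by apply/idP/idP=> /orP[] /eqP e; apply/orP; [right; lia|left; lia|right; lia|left; lia].
move=> /(wattle_pattern_rev (v := up g')) W'; apply: (wattle_of_pattern (h := h')) (W' _).
- by move=> x; rewrite /h'; have := h_lt x; lia.
- by move=> x; rewrite /g' /h' subKn ?hK //; have := h_lt x; lia.
- by move=> k kn; rewrite /h' /g' gK ?subKn //; lia.
- exact: g'_adj.
move=> k kn; rewrite /up /g' (_ : n.-1 - k = (n - k.+2).+1); last lia.
by rewrite (_ : n.-1 - k.+1 = n - k.+2) ?(gt_g_succ g_adj) //; lia.
Qed.

Theorem lemma12 (d : Order.disp_t) (T : finPOrderType d) :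
  hasse_is_path T ->
  ((is_chain T \/ is_wattle T) <-> even_junction_components T).
Proof.
case=> n [f [[f' fK f'K] f_adj]].
case: (pickP (@predT T)) => [x0 _|T0]; last first.
  by split=> _; [move=> x; have := T0 x | left=> x; have := T0 x].
pose g k := oapp f x0 (insub k); pose h x := nat_of_ord (f' x).
have h_lt x : h x < n by apply: ltn_ord.
have hK : cancel h g by move=> x; rewrite /g /h valK /= f'K.
have gK k : k < n -> h (g k) = k by move=> kn; rewrite /g /h insubT /= fK.
have g_adj i j : i < n -> j < n -> hasse_adj (g i) (g j) = (i.+1 == j) || (j.+1 == i).
  by move=> iN jN; rewrite /g !insubT /= f_adj.
rewrite (even_junction_componentsP h_lt hK gK g_adj) even_runsP.
by rewrite (chain_patternP h_lt hK gK g_adj) (wattle_patternP h_lt hK gK g_adj).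
Qed.
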